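(* Let $q$ be a prime with $q \ge 7$, and let \[ H_2(r,s) = r^2 + (6s^2 - 4s^3 - 4s)\,r + s^4 \in \mathbb F_q[r,s]. \] Then the set $\mathfrak P = \{(r,s) \in \mathbb F_q^2 : r \notin\{0,1\},\ s\notin\{0,1\},\ H_2(r,s)=0\}$ has exactly $q-5$ elements.
   Context: Geometric meaning (not needed for the statement): for $\alpha \in \mathbb F_q\setminus\{0,1\}$ let $C_\alpha$ be the nonsingular conic $\alpha xy + (1-\alpha)xz - yz = 0$, the members of the pencil through $[1,0,0],[0,1,0],[0,0,1],[1,1,1]$. By Cayley's criterion, the pair $(C_r,C_s)$ satisfies the Poncelet triangle condition exactly when $H_2(r,s)=0$, so $\mathfrak P$ is the set of such pairs in this pencil. *)

From HB Require Import structures.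
From mathcomp Require Import all_boot all_order all_algebra.
Set Implicit Arguments. Unset Strict Implicit. Unset Printing Implicit Defensive.
Import GRing.Theory.
Local Open Scope ring_scope.

Definition H2 {R : pzRingType} (r s : R) : R :=
  r ^+ 2 + (6%:R * s ^+ 2 - 4%:R * s ^+ 3 - 4%:R * s) * r + s ^+ 4.

Definition PonceletSet (q : nat) : {set 'F_q * 'F_q} :=
  [set rs : 'F_q * 'F_q | [&& rs.1 != 0, rs.1 != 1, rs.2 != 0, rs.2 != 1
                           & H2 rs.1 rs.2 == 0]].

(* Substituting r = s^2 + 2 s^2 (s - 1) z factors H2 r s as a nonzero multiple of
   s z (2 - z) - (2 z - 1), so for s outside {0, 1} the curve H2 = 0 is the conic
   s z (2 - z) = 2 z - 1, which is rational in z.  This gives a bijection between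
   P and the parameters z outside the five values {0, 2, 1/2, 1, -1} where a pole
   occurs or a coordinate becomes 0 or 1. *)

From mathcomp Require Import all_boot all_order all_algebra.
From mathcomp Require Import ring.
Import GRing.Theory.

Local Open Scope ring_scope.

Section PonceletParametrization.
Context {F : fieldType}.
Hypothesis two_neq0 : (2%:R : F) != 0.
Hypothesis three_neq0 : (3%:R : F) != 0.

Definition param_s (z : F) : F := (2%:R * z - 1) / (z * (2%:R - z)).
Definition param_r (z : F) : F := (2%:R * z - 1) ^+ 3 / (z * (2%:R - z) ^+ 3).

Lemma H2_reparam (s z : F) :
  H2 (s ^+ 2 + 2%:R * s ^+ 2 * (s - 1) * z) s =
  - (4%:R * s ^+ 3 * (s - 1) ^+ 2) * (s * z * (2%:R - z) - (2%:R * z - 1)).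
Proof. rewrite /H2; ring. Qed.

Lemma param_s_conic z : z != 0 -> 2%:R - z != 0 ->
  param_s z * z * (2%:R - z) = 2%:R * z - 1.
Proof. by move=> z0 z2; rewrite /param_s; field; rewrite z0 z2. Qed.

Lemma param_r_reparam z : z != 0 -> 2%:R - z != 0 ->
  param_r z = param_s z ^+ 2 + 2%:R * param_s z ^+ 2 * (param_s z - 1) * z.
Proof. by move=> z0 z2; rewrite /param_r /param_s; field; rewrite z0 z2. Qed.

Lemma four_neq0 : (4%:R : F) != 0.
Proof. by rewrite (natrM F 2 2) mulf_neq0. Qed.

(* The poles z = 0, 2 and the parameters of the excluded values s = 0, s = 1, r = 1. *)
Definition exceptional : seq F := [:: 0; 2%:R; 2%:R^-1; 1; -1].

Lemma uniq_exceptional : uniq exceptional.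
Proof.
have six_neq0 : (6%:R : F) != 0 by rewrite (natrM F 2 3) mulf_neq0.
(* Twice the listed elements are [0; 4; 1; 2; -2], whose differences are nonzero. *)
have twice_neq (a b k : F) : k != 0 -> (a - b) * 2%:R = k -> a != b.
  by move=> k0 eq_k; apply: contraNneq k0 => ab; rewrite -eq_k ab subrr mul0r.
rewrite /= !inE !negb_or !andbT; repeat (apply/andP; split).
- by apply: (twice_neq _ _ (- 4%:R)); [rewrite oppr_eq0 four_neq0 | ring].
- by apply: (twice_neq _ _ (- 1)); [rewrite oppr_eq0 oner_eq0 | field].
- by apply: (twice_neq _ _ (- 2%:R)); [rewrite oppr_eq0 | ring].
- by apply: (twice_neq _ _ 2%:R) => //; ring.
- by apply: (twice_neq _ _ 3%:R) => //; field.
- by apply: (twice_neq _ _ 2%:R) => //; ring.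
- by apply: (twice_neq _ _ 6%:R) => //; ring.
- by apply: (twice_neq _ _ (- 1)); [rewrite oppr_eq0 oner_eq0 | field].
- by apply: (twice_neq _ _ 3%:R) => //; field.
- by apply: (twice_neq _ _ 4%:R); [exact: four_neq0 | ring].
Qed.

Lemma nonexceptional_factors z : z \notin exceptional ->
  [/\ z != 0, 2%:R - z != 0, 2%:R * z - 1 != 0, z - 1 != 0 & z + 1 != 0].
Proof.
rewrite !inE !negb_or => /and5P[z0 z2 z_half z1 z_m1].
rewrite !subr_eq0 -[z + 1]opprK opprD oppr_eq0 subr_eq0 eqr_oppLR [2%:R == z]eq_sym.
split=> //; apply: contra z_half => /eqP two_z.
by apply/eqP/(mulfI two_neq0); rewrite two_z mulfV.
Qed.

Lemma param_mem z : z \notin exceptional ->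
  [&& param_r z != 0, param_r z != 1, param_s z != 0, param_s z != 1
    & H2 (param_r z) (param_s z) == 0].
Proof.
move=> /nonexceptional_factors[z0 z2 z_half z1 z_m1].
have s_sub1 : param_s z - 1 = (z - 1) * (z + 1) / (z * (2%:R - z)).
  by rewrite /param_s; field; rewrite z0 z2.
have r_sub1 : param_r z - 1 = (z - 1) * (z + 1) ^+ 3 / (z * (2%:R - z) ^+ 3).
  by rewrite /param_r; field; rewrite z0 z2.
have on_curve : H2 (param_r z) (param_s z) = 0.
  by rewrite param_r_reparam // H2_reparam param_s_conic // subrr mulr0.
rewrite on_curve eqxx andbT.
rewrite -(subr_eq0 (param_r z) 1) -(subr_eq0 (param_s z) 1) r_sub1 s_sub1.
rewrite /param_r /param_s !(mulf_eq0, invr_eq0, expf_eq0) /= !negb_or.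
by rewrite z0 z2 z_half z1 z_m1.
Qed.

Lemma conic_nonexceptional s z : s != 0 -> s != 1 ->
  s * z * (2%:R - z) = 2%:R * z - 1 -> z \notin exceptional.
Proof.
move=> s0 s1 /eqP conic; rewrite !inE !negb_or.
apply/and5P; split; apply: contraTneq conic => ->; rewrite -subr_eq0.
- by rewrite (_ : _ - _ = 1 :> F) ?oner_eq0 //; ring.
- by rewrite (_ : _ - _ = - 3%:R :> F) ?oppr_eq0 //; ring.
- rewrite (_ : _ - _ = s * 3%:R / 4%:R :> F); last by field; rewrite four_neq0.
  by rewrite !mulf_neq0 ?invr_neq0 ?four_neq0.
- by rewrite (_ : _ - _ = s - 1 :> F) ?subr_eq0 //; ring.
- by rewrite (_ : _ - _ = - 3%:R * (s - 1) :> F) ?mulf_neq0 ?oppr_eq0 ?subr_eq0 //; ring.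
Qed.

Definition param_inv (r s : F) : F := (r - s ^+ 2) / (2%:R * s ^+ 2 * (s - 1)).

Lemma param_invK z : z \notin exceptional ->
  param_inv (param_r z) (param_s z) = z.
Proof.
move=> z_ok; have /and5P[_ _ s0 s1 _] := param_mem z z_ok.
have [z0 z2 _ _ _] := nonexceptional_factors z z_ok.
rewrite /param_inv param_r_reparam // addrC addKr mulrC mulKf //.
by rewrite mulf_neq0 ?subr_eq0 // mulf_neq0 ?expf_neq0.
Qed.

Lemma param_surj r s : s != 0 -> s != 1 -> H2 r s = 0 ->
  param_inv r s \notin exceptional /\
  (param_r (param_inv r s), param_s (param_inv r s)) = (r, s).
Proof.
move=> s0 s1 on_curve; set z := param_inv r s.
have D0 : 2%:R * s ^+ 2 * (s - 1) != 0.
  by rewrite mulf_neq0 ?subr_eq0 // mulf_neq0 ?expf_neq0.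
have r_eq : r = s ^+ 2 + 2%:R * s ^+ 2 * (s - 1) * z.
  by rewrite /z /param_inv mulrC divfK // addrC subrK.
have conic : s * z * (2%:R - z) = 2%:R * z - 1.
  apply/eqP; rewrite -subr_eq0; move: on_curve; rewrite r_eq H2_reparam => /eqP.
  have E0 : 4%:R * s ^+ 3 * (s - 1) ^+ 2 != 0.
    by rewrite !mulf_neq0 ?expf_neq0 ?four_neq0 ?subr_eq0.
  by rewrite mulf_eq0 oppr_eq0 (negbTE E0).
have z_ok := conic_nonexceptional s z s0 s1 conic.
have [z0 z2 _ _ _] := nonexceptional_factors z z_ok.
have s_eq : param_s z = s.
  by rewrite /param_s -conic -[s * z * _]mulrA mulfK // mulf_neq0.
by split; rewrite // param_r_reparam // s_eq -r_eq.
Qed.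

End PonceletParametrization.

Lemma card_poncelet (F : finFieldType) : (2%:R : F) != 0 -> (3%:R : F) != 0 ->
  #|[set rs : F * F | [&& rs.1 != 0, rs.1 != 1, rs.2 != 0, rs.2 != 1
                       & H2 rs.1 rs.2 == 0]]| = (#|F| - 5)%N.
Proof.
move=> two_neq0 three_neq0.
set P := [set rs | _].
have -> : P = [set (param_r z, param_s z) | z in [set z | z \notin exceptional]].
  apply/setP => -[r s]; rewrite !inE /=; apply/idP/imsetP.
  - case/and5P => _ _ s0 s1 /eqP on_curve.
    have [z_ok <-] := param_surj two_neq0 three_neq0 r s s0 s1 on_curve.
    by exists (param_inv r s); rewrite ?in_set.
  - by case=> z; rewrite in_set => z_ok [-> ->]; apply: param_mem.
rewrite card_in_imset => [|z w]; last first.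
  rewrite !in_set => z_ok w_ok [r_eq s_eq].
  by rewrite -(param_invK two_neq0 z z_ok) -(param_invK two_neq0 w w_ok) r_eq s_eq.
have -> : [set z : F | z \notin exceptional] = ~: [set z in exceptional].
  by apply/setP => z; rewrite in_setC !in_set.
by rewrite cardsCs setCK cardsE (card_uniqP (uniq_exceptional two_neq0 three_neq0)).
Qed.

Lemma Fp_natr_neq0 p n : prime p -> (0 < n < p)%N -> (n%:R : 'F_p) != 0.
Proof.
by move=> p_pr /andP[n_gt0 n_lt_p]; rewrite -(dvdn_pcharf (pchar_Fp p_pr)) gtnNdvd.
Qed.

Local Close Scope ring_scope.

Theorem mainTheorem2 (q : nat) (hq : prime q) (hq7 : 7 <= q) :
  #|PonceletSet q| = q - 5.
Proof.
by rewrite /PonceletSet card_poncelet ?card_Fp ?Fp_natr_neq0 //;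
  apply: leq_trans hq7.
Qed.
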